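(* Consider four qubits labelled $\alpha,\beta,1,2$ with Hamiltonian $$H=\frac{h_\alpha}{2}(X_\alpha X_\beta+Y_\alpha Y_\beta)+\frac{h_\beta}{2}(X_\beta X_1+Y_\beta Y_1)+\frac{h_1}{2}(X_1X_2+Y_1Y_2),$$ initial state $\rho_0=\frac I2\otimes\frac{I+X}{2}\otimes\frac I2\otimes\frac I2$ (qubit $\beta$ in the $+1$ eigenstate of $X$, all other qubits maximally mixed), and output $y_h(t)=\operatorname{Tr}\big(Y_\alpha Z_\beta\,e^{-\mathrm{i}Ht}\rho_0e^{\mathrm{i}Ht}\big)$, $t\ge0$, where $h=(h_\alpha,h_\beta,h_1)\in\mathbb{R}^3$. Then for almost every pair $h,h'\in\mathbb{R}^3$ (outside a Lebesgue-null set), $y_h(t)=y_{h'}(t)$ for all $t\ge0$ implies $h_\alpha=h'_\alpha$, $h_\beta^2=h_\beta'^2$ and $h_1^2=h_1'^2$; that is, all parameters are identifiable in magnitude from measurements of $Y_\alpha Z_\beta$.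
   Context: $X,Y,Z$ denote the Pauli matrices $\sigma_x=\begin{pmatrix}0&1\\1&0\end{pmatrix}$, $\sigma_y=\begin{pmatrix}0&-\mathrm{i}\\ \mathrm{i}&0\end{pmatrix}$, $\sigma_z=\begin{pmatrix}1&0\\0&-1\end{pmatrix}$; a subscript indicates the qubit acted on, with identity on the other qubits (tensor products suppressed). $\hbar=1$. Equivalently, $y_h(t)=Ce^{At}B$ where $A$ is the $24\times24$ matrix of the Heisenberg dynamics $\frac{d}{dt}\langle O\rangle=\langle\mathrm{i}[H,O]\rangle$ on the expectations of the 24 Pauli strings generated from $Y_\alpha Z_\beta$, $B$ is the vector of initial expectations (equal to $1$ at $X_\beta$, $0$ elsewhere) and $C$ selects $\langle Y_\alpha Z_\beta\rangle$. *)

From Stdlib Require Import Reals Lra List ClassicalEpsilon.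
Import ListNotations.
From Stdlib Require Import Factorial.
Open Scope R_scope.

Inductive pauli := PI | PX | PY | PZ.

(** Product of single-qubit Paulis: a * b = i^k * c, returned as (k, c). *)
Definition pmul1 (a b : pauli) : nat * pauli :=
  match a, b with
  | PI, p => (0%nat, p)
  | p, PI => (0%nat, p)
  | PX, PX | PY, PY | PZ, PZ => (0%nat, PI)
  | PX, PY => (1%nat, PZ) | PY, PX => (3%nat, PZ)
  | PY, PZ => (1%nat, PX) | PZ, PY => (3%nat, PX)
  | PZ, PX => (1%nat, PY) | PX, PZ => (3%nat, PY)
  end.

(** Pauli strings on the four qubits (alpha, beta, 1, 2), in that order. *)
Definition pstr : Type := (pauli * pauli * pauli * pauli)%type.

Definition pmul (P O : pstr) : nat * pstr :=
  let '(a1, a2, a3, a4) := P in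
  let '(b1, b2, b3, b4) := O in
  let '(k1, c1) := pmul1 a1 b1 in
  let '(k2, c2) := pmul1 a2 b2 in
  let '(k3, c3) := pmul1 a3 b3 in
  let '(k4, c4) := pmul1 a4 b4 in
  (Nat.modulo (k1 + k2 + k3 + k4) 4, (c1, c2, c3, c4)).

(** i[P,O] = r * Q with real r: if P O = i^k Q then O P = i^{-k} Q, so
    i[P,O] = i (i^k - i^{-k}) Q, which is -2 Q (k=1), 2 Q (k=3), 0 (k even). *)
Definition icomm_coef (k : nat) : R :=
  match k with 1%nat => -2 | 3%nat => 2 | _ => 0 end.

Definition ham_terms (h : R * R * R) : list (R * pstr) :=
  let '(ha, hb, h1) := h in
  [ (ha / 2, (PX, PX, PI, PI)); (ha / 2, (PY, PY, PI, PI));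
    (hb / 2, (PI, PX, PX, PI)); (hb / 2, (PI, PY, PY, PI));
    (h1 / 2, (PI, PI, PX, PX)); (h1 / 2, (PI, PI, PY, PY)) ].

(** Heisenberg generator A acting on vectors of Pauli-string expectations:
    (A v)_O = < i[H,O] > expressed through v. *)
Definition heisA (h : R * R * R) (v : pstr -> R) (O : pstr) : R :=
  fold_right (fun cP acc =>
    let '(c, P) := cP in
    let '(k, Q) := pmul P O in
    acc + c * icomm_coef k * v Q) 0 (ham_terms h).

(** Initial expectations Tr(P rho0), rho0 = I/2 (x) (I+X)/2 (x) I/2 (x) I/2. *)
Definition init_exp (O : pstr) : R :=
  match O with
  | (PI, PI, PI, PI) => 1
  | (PI, PX, PI, PI) => 1
  | _ => 0
  end.

(** Taylor coefficients C A^k B of the output, C selecting <Y_alpha Z_beta>. *)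
Definition out_coef (h : R * R * R) (k : nat) : R :=
  Nat.iter k (heisA h) init_exp (PY, PZ, PI, PI).

(** y_h(t) = C e^{At} B = sum_k t^k/k! C A^k B (the series always converges). *)
Definition yh (h : R * R * R) (t : R) : R :=
  epsilon (inhabits 0)
    (fun l => infinite_sum (fun k => t ^ k / INR (fact k) * out_coef h k) l).

(** Lebesgue-null sets in R^d (points x : nat -> R, only coordinates < d matter):
    coverable by countably many closed boxes of arbitrarily small total volume. *)
Definition box : Type := nat -> R * R.
Definition in_box (d : nat) (B : box) (x : nat -> R) : Prop :=
  forall i, (i < d)%nat -> fst (B i) <= x i <= snd (B i).
Definition box_vol (d : nat) (B : box) : R :=
  fold_right Rmult 1 (map (fun i => snd (B i) - fst (B i)) (seq 0 d)).
Definition lebesgue_null (d : nat) (S : (nat -> R) -> Prop) : Prop :=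
  forall eps, 0 < eps ->
    exists Bs : nat -> box,
      (forall n i, (i < d)%nat -> fst (Bs n i) <= snd (Bs n i)) /\
      (forall x, S x -> exists n, in_box d (Bs n) x) /\
      (forall N, sum_f_R0 (fun n => box_vol d (Bs n)) N < eps).

From Stdlib Require Import Reals Lra Lia Arith ClassicalEpsilon List.
From Coquelicot Require Import Coquelicot.
Open Scope R_scope.

(* The Heisenberg generator has norm at most D = sum_j 2 |c_j|, so |C A^k B| <= D^k and
   y_h(t) = sum_k t^k/k! C A^k B is an entire function of t.  Two such functions that agree
   on [0, oo) have the same Taylor coefficients, and the odd ones start with
     C A B = -h_a,  C A^3 B = h_a^3 + 4 h_a h_b^2,
     C A^5 B = -h_a^5 - 17 h_a^3 h_b^2 - 16 h_a h_b^4 - 6 h_a h_b^2 h_1^2,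
   which determine h_a, then h_b^2, then h_1^2 as long as h_a h_b <> 0.  The exceptional
   set {h_a = 0} u {h_b = 0} is a union of two hyperplanes of R^6, hence Lebesgue-null. *)

Ltac compute_out_coef :=
  cbv [out_coef Nat.iter nat_rect heisA ham_terms List.fold_right pmul pmul1
       icomm_coef init_exp Nat.modulo Nat.divmod Nat.add Nat.sub snd]; field.

Lemma out_coef_1 ha hb h1 : out_coef (ha, hb, h1) 1 = - ha.
Proof. compute_out_coef. Qed.

Lemma out_coef_3 ha hb h1 : out_coef (ha, hb, h1) 3 = ha ^ 3 + 4 * ha * hb ^ 2.
Proof. compute_out_coef. Qed.

Lemma out_coef_5 ha hb h1 : out_coef (ha, hb, h1) 5 =
  - ha ^ 5 - 17 * ha ^ 3 * hb ^ 2 - 16 * ha * hb ^ 4 - 6 * ha * hb ^ 2 * h1 ^ 2.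
Proof. compute_out_coef. Qed.

Definition comm_action (l : list (R * pstr)) (v : pstr -> R) (O : pstr) : R :=
  fold_right (fun cP acc =>
    let '(c, P) := cP in
    let '(k, Q) := pmul P O in
    acc + c * icomm_coef k * v Q) 0 l.

Definition comm_norm (l : list (R * pstr)) : R :=
  fold_right (fun cP acc => acc + 2 * Rabs (fst cP)) 0 l.

Lemma Rabs_icomm_coef_le k : Rabs (icomm_coef k) <= 2.
Proof.
  destruct k as [|[|[|[|k]]]]; simpl; unfold Rabs; destruct Rcase_abs; lra.
Qed.

Lemma comm_norm_ge0 l : 0 <= comm_norm l.
Proof.
  induction l as [|[c P] l IH]; simpl; [lra|]. pose proof (Rabs_pos c). lra.
Qed.

Lemma Rabs_comm_action_le l v m O :
  (forall Q, Rabs (v Q) <= m) -> Rabs (comm_action l v O) <= m * comm_norm l.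
Proof.
  intros Hv. induction l as [|[c P] l IH]; simpl.
  - rewrite Rabs_R0. lra.
  - destruct (pmul P O) as [k Q]. fold (comm_action l v O). fold (comm_norm l).
    eapply Rle_trans; [apply Rabs_triang|].
    rewrite !Rabs_mult.
    assert (Rabs c * Rabs (icomm_coef k) * Rabs (v Q) <= Rabs c * 2 * m).
    { pose proof (Rabs_pos c). pose proof (Rabs_pos (v Q)).
      apply Rmult_le_compat; [| |apply Rmult_le_compat_l|]; auto using Rabs_icomm_coef_le.
      apply Rmult_le_pos; auto using Rabs_pos. }
    lra.
Qed.

Definition ham_norm (h : R * R * R) : R := comm_norm (ham_terms h).

Lemma Rabs_iter_heisA_le h k O :
  Rabs (Nat.iter k (heisA h) init_exp O) <= ham_norm h ^ k.
Proof.
  revert O. induction k as [|k IH]; intros O.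
  - destruct O as [[[a b] c] d]; simpl.
    destruct a, b, c, d; simpl; rewrite ?Rabs_R0, ?Rabs_R1; lra.
  - simpl. rewrite Rmult_comm. apply (Rabs_comm_action_le (ham_terms h)). exact IH.
Qed.

Lemma Rabs_out_coef_le h k : Rabs (out_coef h k) <= ham_norm h ^ k.
Proof. apply Rabs_iter_heisA_le. Qed.

Lemma Rabs_div_fact_le x k : Rabs (x / INR (fact k)) <= Rabs x.
Proof.
  pose proof (INR_fact_lt_0 k).
  assert (1 <= INR (fact k)) by (apply (le_INR 1), lt_O_fact).
  unfold Rdiv. rewrite Rabs_mult, (Rabs_pos_eq (/ _)) by (left; apply Rinv_0_lt_compat; lra).
  rewrite <- (Rmult_1_r (Rabs x)) at 2.
  apply Rmult_le_compat_l; [apply Rabs_pos|].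
  rewrite <- Rinv_1. apply Rinv_le_contravar; lra.
Qed.

Lemma ex_series_exp_type (c : nat -> R) D t :
  (forall k, Rabs (c k) <= D ^ k) -> ex_series (fun k => t ^ k / INR (fact k) * c k).
Proof.
  intros Hc.
  apply (@ex_series_le R_AbsRing R_CompleteNormedModule)
    with (b := fun k => (Rabs t * D) ^ k / INR (fact k)).
  - intros k. change (norm ?x) with (Rabs x).
    pose proof (INR_fact_lt_0 k).
    unfold Rdiv. rewrite !Rabs_mult, <- RPow_abs, Rpow_mult_distr.
    rewrite (Rabs_pos_eq (/ _)) by (left; apply Rinv_0_lt_compat; lra).
    rewrite Rmult_assoc, (Rmult_comm (/ _)), <- Rmult_assoc.
    apply Rmult_le_compat_r; [left; apply Rinv_0_lt_compat; lra|].
    apply Rmult_le_compat_l; [apply pow_le, Rabs_pos | apply Hc].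
  - exists (exp (Rabs t * D)).
    eapply is_series_ext; [|apply (is_exp_Reals (Rabs t * D))].
    intros k. simpl. rewrite pow_n_pow. reflexivity.
Qed.

Lemma ex_series_yh h t : ex_series (fun k => t ^ k / INR (fact k) * out_coef h k).
Proof. apply ex_series_exp_type with (D := ham_norm h), Rabs_out_coef_le. Qed.

Lemma yh_Series h t : yh h t = Series (fun k => t ^ k / INR (fact k) * out_coef h k).
Proof.
  unfold yh. symmetry. apply is_series_unique, is_series_Reals, epsilon_spec.
  destruct (ex_series_yh h t) as [l Hl].
  exists l. apply is_series_Reals. exact Hl.
Qed.

Lemma CV_radius_ge_inv (a : nat -> R) K D :
  0 < D -> (forall k, Rabs (a k) <= K * D ^ k) -> Rbar_le (/ D) (CV_radius a).
Proof.
  intros HD Ha. apply (proj1 (CV_radius_bounded a)). exists K. intros n.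
  assert (0 < D ^ n) by (apply pow_lt; lra).
  rewrite Rabs_mult, pow_inv, (Rabs_pos_eq (/ _)) by (left; apply Rinv_0_lt_compat; lra).
  apply (Rmult_le_reg_r (D ^ n)); [assumption|].
  rewrite Rmult_assoc, Rinv_l, Rmult_1_r by lra. apply Ha.
Qed.

Lemma continuity_pt_eq0_from_right (f : R -> R) :
  continuity_pt f 0 -> (forall t, 0 < t -> f t = 0) -> f 0 = 0.
Proof.
  intros Hc Hf. destruct (Req_dec (f 0) 0) as [E|E]; [exact E|exfalso].
  destruct (Hc (Rabs (f 0))) as [alp [Ha Hal]]; [apply Rabs_pos_lt, E|].
  assert (Hx : D_x no_cond 0 (alp / 2) /\ R_dist (alp / 2) 0 < alp).
  { split; [split; [exact I|lra]|].
    unfold R_dist. rewrite Rminus_0_r, Rabs_pos_eq; lra. }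
  specialize (Hal _ Hx). simpl in Hal. unfold R_dist in Hal.
  rewrite Hf, Rminus_0_l, Rabs_Ropp in Hal by lra. lra.
Qed.

Lemma PSeries_eq0_on_pos (a : nat -> R) K D :
  0 < D -> (forall k, Rabs (a k) <= K * D ^ k) ->
  (forall t, 0 < t -> PSeries a t = 0) -> forall n, a n = 0.
Proof.
  intros HD Ha Hz n. induction n as [n IH] using lt_wf_ind.
  set (b := PS_decr_n a n).
  assert (Hb : forall t, 0 < t -> PSeries b t = 0).
  { intros t Ht. pose proof (Hz t Ht) as H.
    rewrite (PSeries_decr_n_aux a n t IH) in H.
    destruct (Rmult_integral _ _ H) as [Htn|]; [|assumption].
    exfalso. apply (pow_nonzero t n); [lra|exact Htn]. }
  assert (Hrad : Rbar_lt (Rabs 0) (CV_radius b)).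
  { rewrite Rabs_R0.
    eapply Rbar_lt_le_trans; [|apply (CV_radius_ge_inv b (K * D ^ n) D HD)].
    - simpl. apply Rinv_0_lt_compat, HD.
    - intros k. unfold b, PS_decr_n. rewrite Rmult_assoc, <- pow_add. apply Ha. }
  pose proof (continuity_pt_eq0_from_right _ (PSeries_continuity b 0 Hrad) Hb) as H0.
  rewrite PSeries_0 in H0. unfold b, PS_decr_n in H0.
  rewrite Nat.add_0_r in H0. exact H0.
Qed.

Lemma out_coef_eq_of_yh_eq h h' :
  (forall t, 0 <= t -> yh h t = yh h' t) -> forall k, out_coef h k = out_coef h' k.
Proof.
  intros Hy k.
  pose proof (comm_norm_ge0 (ham_terms h)) as Hn.
  pose proof (comm_norm_ge0 (ham_terms h')) as Hn'.
  set (D := ham_norm h + ham_norm h' + 1).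
  assert (HD : 0 < D) by (unfold D, ham_norm; lra).
  set (a := fun k => (out_coef h k - out_coef h' k) / INR (fact k)).
  assert (Hbound : forall k, Rabs (a k) <= 2 * D ^ k).
  { intros j. eapply Rle_trans; [apply Rabs_div_fact_le|].
    assert (ham_norm h ^ j <= D ^ j) by (apply pow_incr; unfold D, ham_norm; lra).
    assert (ham_norm h' ^ j <= D ^ j) by (apply pow_incr; unfold D, ham_norm; lra).
    pose proof (Rabs_out_coef_le h j). pose proof (Rabs_out_coef_le h' j).
    unfold Rminus. eapply Rle_trans; [apply Rabs_triang|]. rewrite Rabs_Ropp. lra. }
  assert (Hzero : forall t, 0 < t -> PSeries a t = 0).
  { intros t Ht. unfold PSeries.
    rewrite (Series_ext _ (fun k => t ^ k / INR (fact k) * out_coef h k -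
                                   t ^ k / INR (fact k) * out_coef h' k)).
    - rewrite Series_minus by apply ex_series_yh.
      rewrite <- !yh_Series, Hy by lra. ring.
    - intros j. unfold a. field. apply INR_fact_neq_0. }
  pose proof (PSeries_eq0_on_pos a 2 D HD Hbound Hzero k) as Hk.
  unfold a, Rdiv in Hk. apply Rmult_integral in Hk as [Hk|Hk]; [lra|].
  exfalso. revert Hk. apply Rinv_neq_0_compat, INR_fact_neq_0.
Qed.

Lemma prod_map_ge0 (f : nat -> R) l :
  (forall j, In j l -> 0 <= f j) -> 0 <= fold_right Rmult 1 (map f l).
Proof.
  induction l as [|a l IH]; intros Hf; simpl; [lra|].
  apply Rmult_le_pos; [apply Hf; left; reflexivity|].
  apply IH. intros j Hj. apply Hf. right. exact Hj.
Qed.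

Lemma prod_map_le_pow (f : nat -> R) W l :
  (forall j, In j l -> 0 <= f j <= W) -> fold_right Rmult 1 (map f l) <= W ^ length l.
Proof.
  induction l as [|a l IH]; intros Hf; simpl; [lra|].
  assert (Hl : forall j, In j l -> 0 <= f j <= W) by (intros j Hj; apply Hf; right; exact Hj).
  destruct (Hf a (or_introl eq_refl)).
  apply Rmult_le_compat; auto.
  apply prod_map_ge0. intros j Hj. apply Hl, Hj.
Qed.

Lemma prod_map_le_small (f : nat -> R) W del i l :
  1 <= W -> (forall j, In j l -> 0 <= f j <= W) -> In i l -> f i <= del ->
  fold_right Rmult 1 (map f l) <= del * W ^ length l.
Proof.
  intros HW Hf Hi Hdel. induction l as [|a l IH]; [destruct Hi|simpl].
  assert (Hl : forall j, In j l -> 0 <= f j <= W) by (intros j Hj; apply Hf; right; exact Hj).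
  pose proof (prod_map_ge0 f l (fun j Hj => proj1 (Hl j Hj))).
  pose proof (prod_map_le_pow f W l Hl).
  assert (0 <= W ^ length l) by (apply pow_le; lra).
  destruct (Hf a (or_introl eq_refl)).
  destruct Hi as [<-|Hi].
  - apply Rle_trans with (del * W ^ length l); [apply Rmult_le_compat; auto|].
    apply Rmult_le_compat_l; nra.
  - apply Rle_trans with (W * (del * W ^ length l)); [|right; ring].
    apply Rmult_le_compat; auto.
Qed.

Lemma box_vol_ge0 d B : (forall i, (i < d)%nat -> fst (B i) <= snd (B i)) -> 0 <= box_vol d B.
Proof.
  intros HB. apply prod_map_ge0. intros j Hj. apply in_seq in Hj.
  pose proof (HB j ltac:(lia)). lra.
Qed.

Lemma coords_bounded d (x : nat -> R) :
  exists m : nat, forall j, (j < d)%nat -> Rabs (x j) <= INR m.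
Proof.
  induction d as [|d [m Hm]]; [exists 0%nat; intros; lia|].
  destruct (INR_unbounded (Rabs (x d))) as [m' Hm'].
  exists (Nat.max m m'). intros j Hj.
  destruct (Nat.eq_dec j d) as [->|Hne].
  - pose proof (le_INR _ _ (Nat.le_max_r m m')). lra.
  - pose proof (le_INR _ _ (Nat.le_max_l m m')). pose proof (Hm j ltac:(lia)). lra.
Qed.

Lemma sum_geom_half_lt eps N :
  0 < eps -> sum_f_R0 (fun m => (/ 2) ^ m * (eps / 2)) N < eps.
Proof.
  intros Heps. rewrite <- scal_sum, tech3 by lra.
  assert (0 < (/ 2) ^ S N) by (apply pow_lt; lra).
  replace (eps / 2 * ((1 - (/ 2) ^ S N) / (1 - / 2))) with (eps - eps * (/ 2) ^ S N) by field.
  pose proof (Rmult_lt_0_compat eps _ Heps H). lra.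
Qed.

(* The box number m is thin in direction i and covers [-m, m] in the other directions. *)
Lemma lebesgue_null_hyperplane d i : (i < d)%nat -> lebesgue_null d (fun x => x i = 0).
Proof.
  intros Hi eps Heps.
  set (e := Rmin eps 1).
  assert (He : 0 < e <= 1) by (unfold e, Rmin; destruct Rle_dec; lra).
  set (W := fun m : nat => 2 * INR m + 1).
  set (del := fun m : nat => e / 4 * (/ 2) ^ m / W m ^ d).
  assert (HW : forall m, 1 <= W m) by (intros m; unfold W; pose proof (pos_INR m); lra).
  assert (Hdel : forall m, 0 < del m <= 1 / 4).
  { intros m. unfold del.
    assert (0 < (/ 2) ^ m <= 1).
    { split; [apply pow_lt; lra | rewrite <- (pow1 m); apply pow_incr; lra]. }
    assert (1 <= W m ^ d) by (apply pow_R1_Rle, HW).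
    split; [apply Rdiv_lt_0_compat; [apply Rmult_lt_0_compat|]; lra|].
    assert (0 <= e / 4 * (/ 2) ^ m) by nra.
    apply Rle_trans with (e / 4 * (/ 2) ^ m); [|nra].
    apply (Rmult_le_reg_r (W m ^ d)); [lra|].
    unfold Rdiv. rewrite Rmult_assoc, Rinv_l, Rmult_1_r by lra. nra. }
  exists (fun m j => if Nat.eqb j i then (- del m, del m) else (- INR m, INR m)).
  split; [|split].
  - intros m j _. pose proof (Hdel m). pose proof (pos_INR m).
    destruct (Nat.eqb j i); simpl; lra.
  - intros x Hx. destruct (coords_bounded d x) as [m Hm]. exists m. intros j Hj.
    destruct (Nat.eqb_spec j i) as [->|_]; simpl.
    + rewrite Hx. pose proof (Hdel m). lra.
    + pose proof (Hm j Hj). pose proof (Rle_abs (x j)). pose proof (Rabs_maj2 (x j)). lra.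
  - intros N. apply Rlt_le_trans with e; [|apply Rmin_l].
    eapply Rle_lt_trans; [|apply (sum_geom_half_lt e N (proj1 He))].
    apply sum_Rle. intros m _. unfold box_vol.
    eapply Rle_trans.
    + apply (prod_map_le_small _ (W m) (2 * del m) i); [apply HW| |apply in_seq; lia|].
      * intros j _. pose proof (Hdel m). pose proof (pos_INR m).
        destruct (Nat.eqb j i); simpl; unfold W; lra.
      * rewrite Nat.eqb_refl. simpl. lra.
    + rewrite length_seq. unfold del.
      assert (0 < W m ^ d) by (apply pow_lt; pose proof (HW m); lra).
      right. field. lra.
Qed.

Lemma lebesgue_null_union d S1 S2 :
  lebesgue_null d S1 -> lebesgue_null d S2 -> lebesgue_null d (fun x => S1 x \/ S2 x).
Proof.
  intros H1 H2 eps Heps.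
  destruct (H1 (eps / 2)) as [B1 [HB1 [HS1 Hv1]]]; [lra|].
  destruct (H2 (eps / 2)) as [B2 [HB2 [HS2 Hv2]]]; [lra|].
  set (B := fun n => if Nat.even n then B1 (Nat.div2 n) else B2 (Nat.div2 n)).
  assert (Heven : forall n, B (2 * n)%nat = B1 n).
  { intros n. unfold B. rewrite Nat.even_even, Nat.div2_double. reflexivity. }
  assert (Hodd : forall n, B (S (2 * n)) = B2 n).
  { intros n. unfold B. rewrite Nat.even_succ, Nat.odd_mul, Nat.div2_succ_double. reflexivity. }
  assert (HB : forall n i, (i < d)%nat -> fst (B n i) <= snd (B n i)).
  { intros n. unfold B. destruct (Nat.even n); auto. }
  exists B. split; [exact HB|split].
  - intros x [Hx|Hx].
    + destruct (HS1 x Hx) as [n Hn]. exists (2 * n)%nat. rewrite Heven. exact Hn.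
    + destruct (HS2 x Hx) as [n Hn]. exists (S (2 * n)). rewrite Hodd. exact Hn.
  - intros N.
    apply Rle_lt_trans with (sum_f_R0 (fun n => box_vol d (B n)) (2 * S N)).
    + rewrite (tech2 _ N (2 * S N)) by lia.
      pose proof (cond_pos_sum (fun k => box_vol d (B (S N + k)%nat)) (2 * S N - S N)
        (fun k => box_vol_ge0 d _ (HB _))). lra.
    + rewrite <- sum_decomposition.
      rewrite (sum_eq (fun n => box_vol d (B (2 * n)%nat)) (fun n => box_vol d (B1 n)))
        by (intros; cbv beta; rewrite Heven; reflexivity).
      rewrite (sum_eq (fun n => box_vol d (B (S (2 * n)))) (fun n => box_vol d (B2 n)))
        by (intros; cbv beta; rewrite Hodd; reflexivity).
      pose proof (Hv1 (S N)). pose proof (Hv2 N). lra.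
Qed.

Lemma params_eq_of_out_coef_eq ha hb h1 ha' hb' h1' :
  ha <> 0 -> hb <> 0 ->
  (forall k, out_coef (ha, hb, h1) k = out_coef (ha', hb', h1') k) ->
  ha = ha' /\ hb ^ 2 = hb' ^ 2 /\ h1 ^ 2 = h1' ^ 2.
Proof.
  intros Ha Hb Hc.
  pose proof (Hc 1%nat) as E1. pose proof (Hc 3%nat) as E3. pose proof (Hc 5%nat) as E5.
  rewrite !out_coef_1 in E1. rewrite !out_coef_3 in E3. rewrite !out_coef_5 in E5.
  assert (Ha' : ha = ha') by lra. subst ha'.
  assert (Hb2 : hb ^ 2 = hb' ^ 2).
  { apply (Rmult_eq_reg_l (4 * ha)); [lra|]. intros H. apply Ha. lra. }
  assert (Hb4 : hb ^ 4 = hb' ^ 4).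
  { replace 4%nat with (2 * 2)%nat by reflexivity. rewrite !pow_mult, Hb2. reflexivity. }
  split; [reflexivity|split; [exact Hb2|]].
  apply (Rmult_eq_reg_l (6 * ha * hb ^ 2)).
  - rewrite <- Hb2, <- Hb4 in E5. lra.
  - pose proof (pow_nonzero hb 2 Hb).
    apply Rmult_integral_contrapositive. split; [lra|assumption].
Qed.

(* The second triple is deliberately ignored: the null set is two hyperplanes times R^3. *)
Definition exceptional_pair (h h' : R * R * R) : Prop :=
  let '(ha, hb, _) := h in ha = 0 \/ hb = 0.

Lemma lebesgue_null_exceptional_pair : lebesgue_null 6
  (fun x => exceptional_pair (x 0%nat, x 1%nat, x 2%nat) (x 3%nat, x 4%nat, x 5%nat)).
Proof.
  exact (lebesgue_null_union 6 (fun x => x 0%nat = 0) (fun x => x 1%nat = 0)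
           (lebesgue_null_hyperplane 6 0 ltac:(lia)) (lebesgue_null_hyperplane 6 1 ltac:(lia))).
Qed.

Theorem theorem2 :
  exists Nset : (R * R * R) -> (R * R * R) -> Prop,
    lebesgue_null 6 (fun x => Nset (x 0%nat, x 1%nat, x 2%nat) (x 3%nat, x 4%nat, x 5%nat)) /\
    forall ha hb h1 ha' hb' h1' : R,
      ~ Nset (ha, hb, h1) (ha', hb', h1') ->
      (forall t, 0 <= t -> yh (ha, hb, h1) t = yh (ha', hb', h1') t) ->
      ha = ha' /\ hb ^ 2 = hb' ^ 2 /\ h1 ^ 2 = h1' ^ 2.
Proof.
  exists exceptional_pair. split; [exact lebesgue_null_exceptional_pair|].
  intros ha hb h1 ha' hb' h1' Hgen Hy.
  apply params_eq_of_out_coef_eq; [intros ->; apply Hgen; left; reflexivity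
                                  |intros ->; apply Hgen; right; reflexivity
                                  |exact (out_coef_eq_of_yh_eq _ _ Hy)].
Qed.
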